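(* Let $H$ be a nonlocal vertex bialgebra and let $V$ be a nonlocal vertex $H$-module-algebra. Then for all $h,h'\in H$ and $v\in V$, $$Y(h,z+x)Y(h',z)v=Y(Y(h,x)h',z)v,$$ where $Y(h,z+x)$ is expanded in nonnegative powers of $x$.
   Context: All vector spaces are over $\mathbb{C}$. A nonlocal vertex algebra is a vector space $V$ with a linear map $Y(\cdot,x):V\to \mathrm{Hom}(V,V((x)))$, $v\mapsto Y(v,x)=\sum_{n\in\mathbb Z}v_nx^{-n-1}$, and a vector $\mathbf 1\in V$ such that for all $v$: $Y(\mathbf 1,x)v=v$, $Y(v,x)\mathbf 1\in V[[x]]$, $\lim_{x\to0}Y(v,x)\mathbf 1=v$; and for all $u,v,w$ there is $k\ge0$ with $(x_0+x_2)^kY(u,x_0+x_2)Y(v,x_2)w=(x_0+x_2)^kY(Y(u,x_0)v,x_2)w$. A module over a nonlocal vertex algebra $H$ is a vector space $W$ with a linear map $Y_W(\cdot,x):H\to\mathrm{Hom}(W,W((x)))$ such that $Y_W(\mathbf 1,x)=1_W$ and for $a,b\in H$, $w\in W$ there is $l\ge0$ with $(x_0+x_2)^lY_W(a,x_0+x_2)Y_W(b,x_2)w=(x_0+x_2)^lY_W(Y(a,x_0)b,x_2)w$. Binomial expressions $f(x_1\pm x_2)$ are expanded in nonnegative powers of the second variable. A nonlocal vertex bialgebra is a nonlocal vertex algebra $H$ with a coalgebra structure $(\Delta,\varepsilon)$ such that $\Delta:H\to H\otimes H$ and $\varepsilon:H\to\mathbb C$ are homomorphisms of nonlocal vertex algebras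 ($H\otimes H$ with the tensor product structure $Y(a\otimes b,x)(a'\otimes b')=Y(a,x)a'\otimes Y(b,x)b'$, $\mathbb C$ with $Y(1,x)=1$): $\varepsilon(\mathbf 1)=1$, $\varepsilon(Y(h,x)h')=\varepsilon(h)\varepsilon(h')$, $\Delta(\mathbf 1)=\mathbf 1\otimes\mathbf 1$, $\Delta(Y(h,x)h')=Y(\Delta(h),x)\Delta(h')$. Write $\Delta(h)=\sum h^{(1)}\otimes h^{(2)}$. A nonlocal vertex $H$-module-algebra is a nonlocal vertex algebra $V$ with an $H$-module structure (vertex operators denoted $Y(h,x)$) such that for $h\in H$, $u,v\in V$: $Y(h,x)v\in V\otimes\mathbb C((x))$ (a finite sum $\sum_i v_i f_i(x)$), $Y(h,x)\mathbf 1=\varepsilon(h)\mathbf 1$, and $Y(h,x)Y(u,z)v=\sum Y(Y(h^{(1)},x-z)u,z)Y(h^{(2)},x)v$. *)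

From HB Require Import structures.
From mathcomp Require Import all_boot all_order all_algebra.
From mathcomp Require Import complex.
From mathcomp Require Import boolp classical_sets fsbigop reals.
Set Implicit Arguments. Unset Strict Implicit. Unset Printing Implicit Defensive.
Import Order.TTheory GRing.Theory Num.Theory.
Local Open Scope ring_scope.

(* Conventions.
   - The ground field C is the complex numbers R[i] for a real field R : realType.
   - A formal series f(x) = sum_n f_n x^n with coefficients in M is encoded by
     its coefficient function  f : int -> M  (f n = coefficient of x^n).
     A series in two variables is encoded by  int -> int -> M.
   - For a vertex operator, Y u v n is the coefficient of x^n in Y(u,x)v,
     i.e. Y u v n = u_{-n-1} v.
   - Sums over Z, N, N x Z are finitely supported sums (fsbigop); in every
     place where they are used the family has finite support, as in the paper.
   - An element of a tensor product U (x) U is represented by a finite list of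
     pure tensors (Sweedler notation); two such lists represent the same
     element iff they agree under every bilinear map (universal property). *)

Section NLVA.
Variable R : realType.
Local Notation C := (R[i]).

Definition laurent (M : zmodType) (f : int -> M) : Prop :=
  exists N : int, forall n, n < N -> f n = 0.

Definition lin (U W : lmodType C) (f : U -> W) : Prop :=
  forall (a : C) u v, f (a *: u + v) = a *: f u + f v.

Definition bilin (U V W : lmodType C) (f : U -> V -> W) : Prop :=
  (forall v, lin (fun u => f u v)) /\ (forall u, lin (f u)).

Definition trilin (U W : lmodType C) (f : U -> U -> U -> W) : Prop :=
  (forall v w, lin (fun u => f u v w)) /\ (forall u w, lin (fun v => f u v w))
  /\ (forall u v, lin (f u v)).

Definition gbinom (n : int) (j : nat) : C :=
  (\prod_(i < j) ((n - (i : nat)%:Z)%:~R : C)) / (j`!)%:R.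

(* coefficient of x0^a x2^b in A(x0+x2) f(x2), where A(x) is an operator
   valued series (A m n = coefficient of x^n in A(x)m), f(x2) a series in x2,
   and A(x0+x2) is expanded in nonnegative powers of x2:
   A(x0+x2) = sum_n A_n sum_{j>=0} binom(n,j) x0^(n-j) x2^j. *)
Definition subst_left (M : lmodType C) (A : M -> int -> M) (f : int -> M)
  : int -> int -> M :=
  fun a b => \sum_(j \in [set: nat]) gbinom (a + j%:Z) j *: A (f (b - j%:Z)) (a + j%:Z).

(* multiplication of a two-variable series by (x0+x2)^k *)
Definition mulXpow (M : lmodType C) (k : nat) (G : int -> int -> M)
  : int -> int -> M :=
  fun a b => \sum_(i < k.+1) ('C(k, i))%:R *: G (a - (i : nat)%:Z) (b - (k - i)%N%:Z).

(* weak associativity:  for all a b w there is l >= 0 with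
   (x0+x2)^l YM(a,x0+x2) YM(b,x2) w = (x0+x2)^l YM(YA(a,x0)b,x2) w *)
Definition weak_assoc (A M : lmodType C) (YA : A -> A -> int -> A)
  (YM : A -> M -> int -> M) : Prop :=
  forall a b w, exists l : nat, forall p q,
    mulXpow l (subst_left (YM a) (YM b w)) p q
    = mulXpow l (fun p' q' => YM (YA a b p') w q') p q.

Record is_nlva (V : lmodType C) (Y : V -> V -> int -> V) (one : V) : Prop := {
  nlva_bilin : forall n, bilin (fun u v => Y u v n);
  nlva_trunc : forall u v, laurent (Y u v);
  nlva_vac : forall v n, Y one v n = if n == 0 then v else 0;
  nlva_creat : forall v n, n < 0 -> Y v one n = 0;
  nlva_creat0 : forall v, Y v one 0 = v;
  nlva_assoc : weak_assoc Y Y }.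

Record is_nlva_module (V : lmodType C) (Y : V -> V -> int -> V) (one : V)
  (W : lmodType C) (YW : V -> W -> int -> W) : Prop := {
  mod_bilin : forall n, bilin (fun a w => YW a w n);
  mod_trunc : forall a w, laurent (YW a w);
  mod_vac : forall w n, YW one w n = if n == 0 then w else 0;
  mod_assoc : weak_assoc Y YW }.

Definition teq2 (H : lmodType C) (s t : seq (H * H)) : Prop :=
  forall (W : lmodType C) (f : H -> H -> W), bilin f ->
    \sum_(p <- s) f p.1 p.2 = \sum_(p <- t) f p.1 p.2.

Definition teq3 (H : lmodType C) (s t : seq (H * H * H)) : Prop :=
  forall (W : lmodType C) (f : H -> H -> H -> W), trilin f ->
    \sum_(p <- s) f p.1.1 p.1.2 p.2 = \sum_(p <- t) f p.1.1 p.1.2 p.2.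

(* image under the bilinear map f of the coefficient of x^n in
   Y(s,x)t  for the tensor product nonlocal vertex algebra H (x) H:
   Y(a(x)b,x)(a'(x)b') = Y(a,x)a' (x) Y(b,x)b'. *)
Definition tensY (H W : lmodType C) (Y : H -> H -> int -> H) (f : H -> H -> W)
  (s t : seq (H * H)) (n : int) : W :=
  \sum_(p <- s) \sum_(q <- t) \sum_(i \in [set: int])
     f (Y p.1 q.1 i) (Y p.2 q.2 (n - i)).

Record is_nlv_bialgebra (H : lmodType C) (Y : H -> H -> int -> H) (one : H)
  (Delta : H -> seq (H * H)) (eps : H -> C) : Prop := {
  bi_nlva : is_nlva Y one;
  eps_lin : forall (a : C) u v, eps (a *: u + v) = a * eps u + eps v;
  Delta_lin : forall (a : C) u v,
    teq2 (Delta (a *: u + v)) ([seq (a *: p.1, p.2) | p <- Delta u] ++ Delta v);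
  coassoc : forall h,
    teq3 [seq (q.1, q.2, p.2) | p <- Delta h, q <- Delta p.1]
         [seq (p.1, q.1, q.2) | p <- Delta h, q <- Delta p.2];
  counit_l : forall h, \sum_(p <- Delta h) eps p.1 *: p.2 = h;
  counit_r : forall h, \sum_(p <- Delta h) eps p.2 *: p.1 = h;
  eps_vac : eps one = 1;
  eps_Y : forall h h' n, eps (Y h h' n) = if n == 0 then eps h * eps h' else 0;
  Delta_vac : teq2 (Delta one) [:: (one, one)];
  Delta_Y : forall h h' n (W : lmodType C) (f : H -> H -> W), bilin f ->
    \sum_(p <- Delta (Y h h' n)) f p.1 p.2 = tensY Y f (Delta h) (Delta h') n }.

(* coefficient of x^a z^m in  Y(Y(h1,x-z)u,z) Y(h2,x)v,
   Y(h1,x-z) expanded in nonnegative powers of z: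
   (x-z)^n = sum_{j>=0} binom(n,j) (-1)^j x^(n-j) z^j; the index (j,p) has n = p + j. *)
Definition ma_term (H V : lmodType C) (Y : V -> V -> int -> V)
  (YHV : H -> V -> int -> V) (h1 h2 : H) (u v : V) (a m : int) : V :=
  \sum_(jp \in [set: nat * int])
     ((-1) ^+ jp.1 * gbinom (jp.2 + jp.1%:Z) jp.1) *:
       Y (YHV h1 u (jp.2 + jp.1%:Z)) (YHV h2 v (a - jp.2)) (m - jp.1%:Z).

Record is_module_algebra (H : lmodType C) (YH : H -> H -> int -> H) (oneH : H)
  (Delta : H -> seq (H * H)) (eps : H -> C)
  (V : lmodType C) (Y : V -> V -> int -> V) (one : V)
  (YHV : H -> V -> int -> V) : Prop := {
  ma_nlva : is_nlva Y one;
  ma_mod : is_nlva_module YH oneH YHV;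
  (* Y(h,x)v in V (x) C((x)) *)
  ma_fin : forall h v, exists (k : nat) (vs : 'I_k -> V) (fs : 'I_k -> int -> C),
    (forall i, laurent (fs i)) /\ forall n, YHV h v n = \sum_(i < k) fs i n *: vs i;
  ma_vac : forall h n, YHV h one n = if n == 0 then eps h *: one else 0;
  (* Y(h,x)Y(u,z)v = sum Y(Y(h1,x-z)u,z)Y(h2,x)v, coefficient of x^a z^m *)
  ma_Y : forall h u v a m,
    YHV h (Y u v m) a = \sum_(p <- Delta h) ma_term Y YHV p.1 p.2 u v a m }.

(* coefficient of z^a x^b in A(z+x) f(z), A(z+x) expanded in nonnegative
   powers of x: (z+x)^n = sum_{j>=0} binom(n,j) z^(n-j) x^j *)
Definition subst_right (M : lmodType C) (A : M -> int -> M) (f : int -> M)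
  : int -> int -> M :=
  fun a b => match b with
    | Posz j => \sum_(m \in [set: int]) gbinom (a - m + j%:Z) j *: A (f m) (a - m + j%:Z)
    | Negz _ => 0
    end.

End NLVA.

From HB Require Import structures.
From mathcomp Require Import all_boot all_order all_algebra.
From mathcomp Require Import complex.
From mathcomp Require Import boolp classical_sets fsbigop reals.
From mathcomp Require Import zify ring.
Import GRing.Theory Num.Theory.
Local Open Scope ring_scope.

(* Weak associativity of the H-module V gives the identity after multiplication
   by (x0 + x2)^l.  Since Y(h',z)v lies in V (x) C((z)), the powers of x in
   Y(h,x)Y(h',z)v are bounded below uniformly in z; for such series the
   expansions of Y(h,x0+x2)Y(h',x2)v in nonnegative powers of x2 and of
   Y(h,z+x)Y(h',z)v in nonnegative powers of x agree once multiplied by a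
   large enough power of (x0 + x2), by a Vandermonde identity.  Both sides of
   the claim are truncated below in x, so that power can then be cancelled. *)

Set Implicit Arguments.
Unset Strict Implicit.
Unset Printing Implicit Defensive.

Section Expansions.
Variable R : realType.
Local Notation C := (R[i]).

Section Linear.
Variables (U W : lmodType C) (f : U -> W).
Hypothesis f_lin : lin f.

Lemma lin0 : f 0 = 0.
Proof.
have := f_lin 1 0 0; rewrite !scale1r !addr0 => f0.
by apply: (addrI (f 0)); rewrite addr0 -f0.
Qed.

Lemma linD u v : f (u + v) = f u + f v.
Proof. by have := f_lin 1 u v; rewrite !scale1r. Qed.

Lemma linZ a u : f (a *: u) = a *: f u.
Proof. by have := f_lin a u 0; rewrite !addr0 lin0 addr0. Qed.

Lemma lin_sum k (c : 'I_k -> C) (u : 'I_k -> U) :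
  f (\sum_(i < k) c i *: u i) = \sum_(i < k) c i *: f (u i).
Proof.
elim/big_rec2: _ => [|i y1 y2 _ <-]; first exact: lin0.
by rewrite linD linZ.
Qed.

End Linear.

Lemma fsbigT_int_window (M : zmodType) (F : int -> M) (m0 : int) (K : nat) :
  (forall m, m < m0 -> F m = 0) -> (forall m, m0 + K%:Z <= m -> F m = 0) ->
  \sum_(m \in [set: int]) F m = \sum_(t < K) F (m0 + t%:Z).
Proof.
move=> F_lo F_hi.
pose r := map (fun t : nat => m0 + t%:Z) (iota 0 K).
have r_uniq : uniq r by rewrite map_inj_uniq ?iota_uniq // => x y /=; lia.
rewrite -(fsbig_widen [set` r] [set: int] F) //; last first.
  move=> m [_ /= m_r]; rewrite /= /set1 /=.
  case: (boolP (m < m0)) => [/F_lo //|le_m0m].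
  case: (boolP (m0 + K%:Z <= m)) => [/F_hi //|lt_m_hi].
  exfalso; apply: m_r; apply/mapP; exists `|m - m0|%N; last lia.
  by rewrite mem_iota add0n; apply/ltP; lia.
rewrite -fsbig_seq // big_map -(big_mkord xpredT (fun t => F (m0 + t%:Z))).
by rewrite /index_iota subn0.
Qed.

Lemma fsbig_nat_subr (M : zmodType) (G : int -> M) (c : int) :
  \sum_(j \in [set: nat]) G (c - j%:Z)
  = \sum_(m \in [set: int]) (if m <= c then G m else 0).
Proof.
transitivity (\sum_(m \in [set: int] `&` [set m | m <= c]) G m); last first.
  by rewrite fsbig_mkcondr; apply: eq_fsbigr => m _; rewrite mem_setE.
rewrite setTI (reindex_fsbig (fun j : nat => c - j%:Z) [set: nat]) //.
split=> [j _ /=|x y _ _ /=|m /= le_mc]; try lia.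
by exists `|c - m|%N => //=; lia.
Qed.

Section Binomial.

Definition gbinomz (n k : int) : C := if k is Posz j then gbinom R n j else 0.

Lemma gbinom0 (n : int) : gbinom R n 0 = 1.
Proof. by rewrite /gbinom big_ord0 fact0 divr1. Qed.

Lemma gbinomS (n : int) j :
  gbinom R (n + 1) j.+1 = gbinom R n j.+1 + gbinom R n j.
Proof.
rewrite /gbinom big_ord_recl big_ord_recr /=.
set P := \prod_(i < j) ((n - (i : nat)%:Z)%:~R : C).
have -> : \prod_(i < j) ((n + 1 - (bump 0 i : nat)%:Z)%:~R : C) = P.
  by apply: eq_bigr => i _; congr (_ %:~R); rewrite /bump /=; lia.
rewrite factS natrM subr0 intrD intrB /=.
have fact_neq0 : (j`!)%:R != 0 :> C by rewrite pnatr_eq0 -lt0n fact_gt0.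
have jS_neq0 : (j.+1)%:R != 0 :> C by rewrite pnatr_eq0.
rewrite -[(j : int)%:~R]/((j%:R : C)) -natr1 -[(1 : int)%:~R]/(1 : C).
by field; rewrite fact_neq0 natr1 jS_neq0.
Qed.

Lemma gbinomz_lt0 (n k : int) : k < 0 -> gbinomz n k = 0.
Proof. by case: k. Qed.

Lemma gbinomzS (n k : int) : gbinomz (n + 1) k = gbinomz n k + gbinomz n (k - 1).
Proof.
case: k => [[|j]|j].
- by rewrite /= !gbinom0 addr0.
- have -> : Posz j.+1 - 1 = Posz j by lia.
  by rewrite /= gbinomS.
- by rewrite !gbinomz_lt0 ?addr0 //; lia.
Qed.

Lemma sum_binS (M : zmodType) L (F : nat -> M) :
  \sum_(i < L.+2) F i *+ 'C(L.+1, i) =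
  \sum_(i < L.+1) F i *+ 'C(L, i) + \sum_(i < L.+1) F i.+1 *+ 'C(L, i).
Proof.
rewrite big_ord_recl [X in _ = X + _]big_ord_recl !bin0.
under eq_bigr => i _ do rewrite /bump /= binS mulrnDr.
rewrite big_split /= -addrA; congr (_ + _).
by rewrite big_ord_recr /= bin_small // mulr0n addr0.
Qed.

Lemma gbinomz_vandermonde L (n k : int) :
  \sum_(i < L.+1) gbinomz n (k - (i : nat)%:Z) *+ 'C(L, i) = gbinomz (n + L%:Z) k.
Proof.
elim: L k => [|L IH] k.
  by rewrite big_ord_recl big_ord0 /= bin0 mulr1n addr0; congr gbinomz; lia.
rewrite (sum_binS L (fun i : nat => gbinomz n (k - i%:Z))) IH.
rewrite (eq_bigr (fun i : 'I_L.+1 => gbinomz n ((k - 1) - (i : nat)%:Z) *+ 'C(L, i)));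
  last by move=> i _; congr (gbinomz _ _ *+ _); lia.
by rewrite IH -gbinomzS; congr gbinomz; lia.
Qed.

Lemma gbinom_nat (N j : nat) : gbinom R N%:Z j = 'C(N, j)%:R.
Proof.
elim: N j => [|N IH] [|j]; rewrite ?gbinom0 ?bin0 //.
  by rewrite /gbinom big_ord_recl /= subr0 !mul0r bin0n.
have -> : (N.+1)%:Z = N%:Z + 1 by lia.
by rewrite gbinomS !IH binS natrD.
Qed.

Lemma gbinomz_sym (N : nat) (p k : int) : p + k = N%:Z -> gbinomz N p = gbinomz N k.
Proof.
case: p => [a|a]; case: k => [b|b] pk_N //=; rewrite ?gbinom_nat.
- have -> : b = (N - a)%N by lia.
  by rewrite bin_sub //; lia.
- by rewrite bin_small //; lia.
- by rewrite bin_small //; lia.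
Qed.

End Binomial.

Section MulXpow.
Variable M : lmodType C.

Lemma mulXpowS l (G : int -> int -> M) p q :
  mulXpow l.+1 G p q = mulXpow l G (p - 1) q + mulXpow l G p (q - 1).
Proof.
rewrite /mulXpow; under eq_bigr do rewrite scaler_nat.
under [X in _ = X + _]eq_bigr do rewrite scaler_nat.
under [X in _ = _ + X]eq_bigr do rewrite scaler_nat.
rewrite (sum_binS l (fun i : nat => G (p - i%:Z) (q - (l.+1 - i)%N%:Z))) addrC.
by congr (_ + _); apply: eq_bigr => i _; have lt_il := ltn_ord i;
  congr (G _ _ *+ _); lia.
Qed.

Lemma mulXpow_addn l k (G1 G2 : int -> int -> M) :
  (forall p q, mulXpow l G1 p q = mulXpow l G2 p q) ->
  forall p q, mulXpow (l + k) G1 p q = mulXpow (l + k) G2 p q.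
Proof.
move=> eq_l; elim: k => [|k IH] p q; first by rewrite addn0.
by rewrite addnS !mulXpowS !IH.
Qed.

Lemma mulXpowB l (G1 G2 : int -> int -> M) p q :
  mulXpow l (fun p q => G1 p q - G2 p q) p q = mulXpow l G1 p q - mulXpow l G2 p q.
Proof. by rewrite /mulXpow -sumrB; apply: eq_bigr => i _; rewrite scalerBr. Qed.

(* Induction on p: the coefficient of x0^p x2^(q+l) in (x0+x2)^l D is D p q
   plus terms D p' _ with p' < p. *)
Lemma mulXpow_eq0 l (D : int -> int -> M) (B : int) :
  (forall p q, mulXpow l D p q = 0) -> (forall p q, p < B -> D p q = 0) ->
  forall p q, D p q = 0.
Proof.
move=> mulD0 D_lo.
suff D_below k : forall p q, p < B + k%:Z -> D p q = 0.
  by move=> p q; apply: (D_below `|p - B|.+1); lia.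
elim: k => [|k IH] p q lt_pB; first by apply: D_lo; lia.
case: (boolP (p < B + k%:Z)) => [/IH //|le_Bp].
have := mulD0 p (q + l%:Z); rewrite /mulXpow big_ord_recl /= bin0 scale1r.
rewrite big1 ?addr0 => [|i _]; last by rewrite IH ?scaler0 //= /bump /=; lia.
by have -> : q + l%:Z - (l - 0)%N%:Z = q by lia.
Qed.

Lemma mulXpow_cancel l (G1 G2 : int -> int -> M) (B : int) :
  (forall p q, mulXpow l G1 p q = mulXpow l G2 p q) ->
  (forall p q, p < B -> G1 p q = G2 p q) ->
  forall p q, G1 p q = G2 p q.
Proof.
move=> eq_mul eq_lo p q; apply/eqP; rewrite -subr_eq0; apply/eqP.
apply: (@mulXpow_eq0 l (fun p q => G1 p q - G2 p q) B) => [p' q'|p' q' lt_pB].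
  by rewrite mulXpowB eq_mul subrr.
by rewrite eq_lo ?subrr.
Qed.

End MulXpow.

Section Reexpansion.
Variable V : lmodType C.
Variables (A : V -> int -> V) (w : int -> V) (N0 M0 : int).
Hypothesis A_lo : forall n m, n < N0 -> A (w m) n = 0.
Hypothesis w_lo : forall n m, m < M0 -> A (w m) n = 0.

Lemma subst_right_gbinomz a b : subst_right A w a b =
  \sum_(m \in [set: int]) gbinomz (a - m + b) b *: A (w m) (a - m + b).
Proof. by case: b => [j|j] //=; rewrite fsbig1 // => m _; rewrite scale0r. Qed.

Lemma subst_left_gbinomz a b : subst_left A w a b =
  \sum_(m \in [set: int]) gbinomz (a + (b - m)) (b - m) *: A (w m) (a + (b - m)).
Proof.
pose F m := gbinomz (a + (b - m)) (b - m) *: A (w m) (a + (b - m)).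
transitivity (\sum_(j \in [set: nat]) F (b - j%:Z)).
  apply: eq_fsbigr => j _; rewrite /F.
  by have -> : b - (b - j%:Z) = j%:Z by lia.
rewrite fsbig_nat_subr; apply: eq_fsbigr => m _.
by case: ifP => // /negbT gt_mb; rewrite /F gbinomz_lt0 ?scale0r //; lia.
Qed.

(* The lower bound N0 on the x-powers makes n + L a natural number for every
   contributing n, so the two Vandermonde sums are symmetric binomials. *)
Lemma mulXpow_subst_left_right L : 0 <= N0 + L%:Z -> forall p q,
  mulXpow L (subst_left A w) p q = mulXpow L (fun p q => subst_right A w q p) p q.
Proof.
move=> N0L p q; rewrite /mulXpow.
set s := p + q - L%:Z.
pose K : nat := (absz (q - M0)%R + absz (s - N0 - M0)%R + 1)%N.
pose T (t : nat) := M0 + t%:Z.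
have left_window (i : 'I_L.+1) : subst_left A w (p - i%:Z) (q - (L - i)%N%:Z) =
    \sum_(t < K) gbinomz (s - T t) (q - (L - i)%N%:Z - T t) *: A (w (T t)) (s - T t).
  rewrite subst_left_gbinomz (@fsbigT_int_window _ _ M0 K).
  - apply: eq_bigr => t _; have lt_iL := ltn_ord i; rewrite /T /s.
    by congr (gbinomz _ _ *: A _ _); lia.
  - by move=> m lt_mM0; rewrite w_lo ?scaler0.
  - move=> m le_Km; rewrite gbinomz_lt0 ?scale0r //.
    by have := ltn_ord i; rewrite /K /s; lia.
have right_window (i : 'I_L.+1) : subst_right A w (q - (L - i)%N%:Z) (p - i%:Z) =
    \sum_(t < K) gbinomz (s - T t) (p - i%:Z) *: A (w (T t)) (s - T t).
  rewrite subst_right_gbinomz (@fsbigT_int_window _ _ M0 K).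
  - apply: eq_bigr => t _; have lt_iL := ltn_ord i; rewrite /T /s.
    by congr (gbinomz _ _ *: A _ _); lia.
  - by move=> m lt_mM0; rewrite w_lo ?scaler0.
  - move=> m le_Km; rewrite A_lo ?scaler0 //.
    by have := ltn_ord i; rewrite /K /s; lia.
under eq_bigr do rewrite left_window scaler_sumr.
under [RHS]eq_bigr do rewrite right_window scaler_sumr.
rewrite exchange_big [RHS]exchange_big; apply: eq_bigr => t _ /=.
under eq_bigr do rewrite scalerA mulr_natl.
under [RHS]eq_bigr do rewrite scalerA mulr_natl.
rewrite -!scaler_suml; set n := s - T t.
case: (boolP (n < N0)) => [/A_lo -> |le_N0n]; first by rewrite !scaler0.
congr (_ *: _).
rewrite gbinomz_vandermonde (reindex_inj rev_ord_inj) /=.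
rewrite (eq_bigr (fun i : 'I_L.+1 => gbinomz n ((q - T t) - (i : nat)%:Z) *+ 'C(L, i)));
  last first.
  move=> i _; have lt_iL := ltn_ord i; rewrite subSS bin_sub; last lia.
  by congr (gbinomz _ _ *+ _); lia.
rewrite gbinomz_vandermonde.
have -> : n + L%:Z = Posz (absz (n + L%:Z)) by lia.
by apply/esym/gbinomz_sym; move: le_N0n; rewrite /n /s /T; lia.
Qed.

End Reexpansion.

Lemma lin_span_trunc (V W : lmodType C) (A : V -> int -> W) (w : int -> V) :
  (forall n, lin (A^~ n)) -> (forall u, laurent (A u)) ->
  (exists (k : nat) (vs : 'I_k -> V) (fs : 'I_k -> int -> C),
     forall m, w m = \sum_(i < k) fs i m *: vs i) ->
  exists N, forall n m, n < N -> A (w m) n = 0.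
Proof.
move=> A_lin A_trunc [k [vs [fs w_span]]].
have /choice [N A_vs_lo] : forall i : 'I_k, exists N, forall n, n < N -> A (vs i) n = 0.
  by move=> i; apply: A_trunc.
exists (- (\max_(i < k) `|N i|)%N%:Z) => n m lt_n.
rewrite w_span (lin_sum (A_lin n)) big1 // => i _.
rewrite A_vs_lo ?scaler0 //; have := @leq_bigmax _ (fun i => `|N i|%N) i.
by move: lt_n; case: (\max_(i < k) `|N i|)%N => *; lia.
Qed.

End Expansions.

Theorem lemma4p1 (R : realType)
  (H : lmodType R[i]) (YH : H -> H -> int -> H) (oneH : H)
  (Delta : H -> seq (H * H)) (eps : H -> R[i])
  (V : lmodType R[i]) (Y : V -> V -> int -> V) (one : V)
  (YHV : H -> V -> int -> V) :
  is_nlv_bialgebra YH oneH Delta eps ->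
  is_module_algebra YH oneH Delta eps Y one YHV ->
  forall (h h' : H) (v : V) (a b : int),
    (* coefficient of z^a x^b in Y(h,z+x)Y(h',z)v  and in  Y(Y(h,x)h',z)v *)
    subst_right (YHV h) (YHV h' v) a b = YHV (YH h h' b) v a.
Proof.
move=> bialg modalg h h' v a b.
have V_mod := ma_mod modalg.
have YHV_lin n x : lin (fun u : V => YHV x u n) by case: (mod_bilin V_mod n).
have YHV_lin_l n u : lin (fun x : H => YHV x u n) by case: (mod_bilin V_mod n).
have [M0 YHVv_lo] := mod_trunc V_mod h' v.
have z_lo n m : m < M0 -> YHV h (YHV h' v m) n = 0.
  by move=> lt_m; rewrite YHVv_lo // (lin0 (YHV_lin n h)).
have [N0 x_lo] : exists N0, forall n m, n < N0 -> YHV h (YHV h' v m) n = 0.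
  apply: lin_span_trunc => [n|u|]; [exact: YHV_lin | exact (mod_trunc V_mod h u) |].
  by have [k [vs [fs [_ span]]]] := ma_fin modalg h' v; exists k, vs, fs.
have [Nh YH_lo] := nlva_trunc (bi_nlva bialg) h h'.
have [l assoc] := mod_assoc V_mod h h' v.
pose lhs p q := subst_right (YHV h) (YHV h' v) q p.
pose rhs p q := YHV (YH h h' p) v q.
apply: (@mulXpow_cancel _ _ (l + `|N0|) lhs rhs (- `|Nh|%:Z - 1) _ _ b a)
  => [p q|p q lt_p].
  rewrite -(mulXpow_subst_left_right x_lo z_lo); last lia.
  exact: (mulXpow_addn _ assoc p q).
rewrite /lhs /rhs YH_lo; last lia.
rewrite (lin0 (YHV_lin_l q v)).
by case: p lt_p => [j|j] lt_p; [exfalso; lia | reflexivity].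
Qed.
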